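(* Assume the linear band crossing and Band Crossing Scenario described in the context, with trajectory $(q(t),p(t))$ on $[0,t^* )$ and limit point $(q^*,p^* )$. (i) For all sufficiently small $\delta$ with $0<\delta<t^*$, the system $$\dot q_+=\partial_pE_+(p_+),\quad \dot p_+=-\partial_qW(q_+),\quad q_+(t^* )=q^*,\ p_+(t^* )=p^*$$ has a unique smooth solution $(q_+(t),p_+(t))\in\mathbb R\times U$ on $[t^*-\delta,t^*+\delta]$. This solution satisfies $(q(t),p(t))=(q_+(t),p_+(t))$ for all $t\in[t^*-\delta,t^* )$. (ii) For sufficiently small $T\ge t^*+\delta$, there exists a solution $(q_{n+1}(t),p_{n+1}(t))\in\mathbb R\times\mathcal B$ on $(t^*,T]$ of $$\dot q_{n+1}=\partial_pE_{n+1}(p_{n+1}),\quad \dot p_{n+1}=-\partial_qW(q_{n+1})$$ with $\lim_{t\downarrow t^*}(q_{n+1}(t),p_{n+1}(t))=(q^*,p^* )$ and $G(E_{n+1}(p_{n+1}(t)))>0$ for all $t\in(t^*,T]$. It satisfies $(q_+(t),p_+(t))=(q_{n+1}(t),p_{n+1}(t))$ for all $t\in(t^*,t^*+\delta]$. (iii) Consequently, the map $t\mapsto(\mathfrak q_+(t),\mathfrak p_+(t))$ is smooth as a map $[0,T]\to\mathbb R\times\mathcal B$. This map is defined as $(q(t),p(t))$ on $[0,t^*-\delta]$, as $(q_+(t),p_+(t))$ on $[t^*-\delta,t^*+\delta]$, and as $(q_{n+1}(t),p_{n+1}(t))$ on $[t^*+\delta,T]$.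
   Context: **Potentials.** Let $V:\mathbb R\to\mathbb R$ be smooth and $1$-periodic, and let $W:\mathbb R\to\mathbb R$ be smooth with all derivatives bounded. **Bloch bands.** For $p\in\mathbb R$, $H(p):=\frac12(p-i\partial_z)^2+V(z)$ acts on $1$-periodic functions. Its eigenvalues, ordered with multiplicity, are $E_1(p)\le E_2(p)\le\cdots$, with normalized eigenfunctions $\chi_m(z;p)$ (inner product $\int_0^1\bar fg$). The Brillouin zone is $\mathcal B=[0,2\pi]$, and $G(E_m(p)):=\min_{m'\ne m}|E_m(p)-E_{m'}(p)|$. **Linear band crossing.** $U\subset\mathcal B$ is open with $p^*\in U$, and: - (A1) $E_n(p^* )=E_{n+1}(p^* )$, and this is the only degeneracy of $E_n,E_{n+1}$ in $U$. - (A2) There is $M>0$ with $|E_m(p)-E_{n+1}(p)|,|E_n(p)-E_m(p)|\ge M$ for all $p\in\overline U$ and all $m\notin\{n,n+1\}$. - (A3) The maps $(E_+,\chi_+):=(E_n,\chi_n)$ for $p<p^*$ and $(E_{n+1},\chi_{n+1})$ for $p\ge p^*$, and $(E_-,\chi_-):=(E_{n+1},\chi_{n+1})$ for $p<p^*$ and $(E_n,\chi_n)$ for $p\ge p^*$, are smooth on $U$. - (A4) $\partial_pE_+(p^* )>0$ and $\partial_pE_-(p^* )<0$. **Band Crossing Scenario.** $(q_0,p_0)\in\mathbb R\times\mathcal B$ with $G(E_n(p_0))>0$, and $t^*>0$, are such that $\dot q=\partial_pE_n(p)$, $\dot p=-\partial_qW(q)$, $(q(0),p(0))=(q_0,p_0)$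 has a unique smooth solution $(q(t),p(t))\in\mathbb R\times\mathcal B$ on $[0,t^* )$. Along it $G(E_n(p(t)))>0$ for $t\in[0,t^* )$ and $\lim_{t\uparrow t^*}p(t)=p^*$. With $q^*:=\lim_{t\uparrow t^*}q(t)$, it is assumed that $-\partial_qW(q^* )>0$. *)

From Stdlib Require Import Reals Lra.
From Coquelicot Require Import Coquelicot.
Open Scope R_scope.

Definition smooth (f : R -> R) : Prop := forall (k : nat) (x : R), ex_derive_n f k x.

(** Derivative within a set I (one-sided at endpoints of closed intervals). *)
Definition has_deriv_within (I : R -> Prop) (f : R -> R) (t l : R) : Prop :=
  filterlim (fun s => (f s - f t) / (s - t))
            (within (fun s => I s /\ s <> t) (locally t)) (locally l).

Definition smooth_on (I : R -> Prop) (f : R -> R) : Prop :=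
  exists D : nat -> R -> R,
    (forall t, I t -> D 0%nat t = f t) /\
    (forall (k : nat) (t : R), I t -> has_deriv_within I (D k) t (D (S k) t)).

Definition solves_on (I : R -> Prop) (e W : R -> R) (q p : R -> R) : Prop :=
  forall t, I t ->
    has_deriv_within I q t (Derive e (p t)) /\
    has_deriv_within I p t (- Derive W (q t)).

Definition test_fun (f : R -> C) : Prop :=
  smooth (fun z => Re (f z)) /\ smooth (fun z => Im (f z)) /\
  (forall z, f (z + 1) = f z).

(** quadratic form <f, H(p) f> = int_0^1 1/2 |(p - i d/dz) f|^2 + V |f|^2 *)
Definition qform (V : R -> R) (p : R) (f : R -> C) : R :=
  RInt (fun z =>
     / 2 * ((p * Re (f z) + Derive (fun y => Im (f y)) z) ^ 2
            + (p * Im (f z) - Derive (fun y => Re (f y)) z) ^ 2)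
     + V z * (Re (f z) ^ 2 + Im (f z) ^ 2)) 0 1.

Definition nrm2 (f : R -> C) : R :=
  RInt (fun z => Re (f z) ^ 2 + Im (f z) ^ 2) 0 1.

Fixpoint csum (m : nat) (g : nat -> C) : C :=
  match m with
  | O => 0%C
  | S k => Cplus (csum k g) (g k)
  end.

Definition comb (m : nat) (F : nat -> R -> C) (c : nat -> C) : R -> C :=
  fun z => csum m (fun k => Cmult (c k) (F k z)).

Definition lin_indep (m : nat) (F : nat -> R -> C) : Prop :=
  forall c : nat -> C, (forall z, comb m F c z = 0%C) ->
    forall k, (k < m)%nat -> c k = 0%C.

Definition rayleigh_span (V : R -> R) (p : R) (m : nat) (F : nat -> R -> C) : R -> Prop :=
  fun x => exists c : nat -> C,
    (exists z, comb m F c z <> 0%C) /\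
    x = qform V p (comb m F c) / nrm2 (comb m F c).

(** m-th Bloch band (m >= 1), by the Courant-Fischer min-max principle:
    E_m(p) = inf over m-dim subspaces L of smooth periodic functions of
             sup_{f in L, f <> 0} <f,H(p)f>/<f,f>.
    These are the eigenvalues of H(p) ordered with multiplicity. *)
Definition band (V : R -> R) (m : nat) (p : R) : R :=
  real (Glb_Rbar (fun x => exists F : nat -> R -> C,
      (forall k, (k < m)%nat -> test_fun (F k)) /\ lin_indep m F /\
      Lub_Rbar (rayleigh_span V p m F) = Finite x)).

Definition gap (V : R -> R) (m : nat) (p : R) : R :=
  real (Glb_Rbar (fun x => exists m', (1 <= m')%nat /\ m' <> m /\
      x = Rabs (band V m p - band V m' p))).

(** f is a normalized eigenfunction of H(p) with eigenvalue E:
    1/2 (p^2 f - 2 i p f' - f'') + V f = E f, written in real/imaginary parts. *)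
Definition eigfun (V : R -> R) (p E : R) (f : R -> C) : Prop :=
  test_fun f /\ nrm2 f = 1 /\
  forall z,
    / 2 * (p ^ 2 * Re (f z) + 2 * p * Derive (fun y => Im (f y)) z
           - Derive_n (fun y => Re (f y)) 2 z) + V z * Re (f z) = E * Re (f z) /\
    / 2 * (p ^ 2 * Im (f z) - 2 * p * Derive (fun y => Re (f y)) z
           - Derive_n (fun y => Im (f y)) 2 z) + V z * Im (f z) = E * Im (f z).

(** the smooth branches E_+ and E_- through the crossing point pstar *)
Definition Eplus_band (V : R -> R) (n : nat) (pstar p : R) : R :=
  if Rlt_dec p pstar then band V n p else band V (S n) p.
Definition Eminus_band (V : R -> R) (n : nat) (pstar p : R) : R :=
  if Rlt_dec p pstar then band V (S n) p else band V n p.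

Definition closure_set (U : R -> Prop) (x : R) : Prop :=
  forall eps, 0 < eps -> exists u, U u /\ Rabs (u - x) < eps.

Definition glue (tstar delta : R) (f1 f2 f3 : R -> R) (t : R) : R :=
  if Rle_dec t (tstar - delta) then f1 t
  else if Rle_dec t (tstar + delta) then f2 t else f3 t.

From Stdlib Require Import Reals Lra Lia ClassicalEpsilon Ranalysis5.
From Coquelicot Require Import Coquelicot.
Open Scope R_scope.

(** Near the crossing the branch [E_+] is smooth, so the Hamiltonian system for [E_+]
    through (qstar, pstar) can be solved by hand.  Since [W'(qstar) <> 0], energy
    conservation [E_+(p) + W(q) = const] gives [q = Q(p)] with [Q] smooth, and then
    [p' = - W'(Q(p)) > 0] is a separable scalar equation, solved by inverting
    [t |-> int dp / (- W'(Q(p)))].  Two solutions agreeing at one time agree on short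
    intervals: their differences satisfy [|dq'| <= Lam |dp|] and [|dp'| <= C |dq|], and
    on an interval of length [<= 1 / (2 (Lam + C))] the mean value estimate halves any
    bound on them.  As [p] increases, the incoming band-n trajectory has [p < pstar],
    where band n is [E_+], so it is the [E_+] solution before [tstar]; afterwards
    [p > pstar], where [E_+] is band n+1, whose gap stays open by (A1)-(A2). *)

(** * Derivatives within a set *)

Lemma has_deriv_within_eps I f t l : has_deriv_within I f t l <->
  forall eps, 0 < eps -> exists d, 0 < d /\ forall s, I s -> s <> t -> Rabs (s - t) < d ->
    Rabs ((f s - f t) / (s - t) - l) < eps.
Proof.
  unfold has_deriv_within; rewrite filterlim_locally; split.
  - intros H eps Heps. destruct (H (mkposreal eps Heps)) as [d Hd].
    exists d; split; [apply cond_pos|]. intros s Is Hs Hsd. apply (Hd s); auto.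
  - intros H eps. destruct (H eps (cond_pos eps)) as [d [Hd0 Hd]].
    exists (mkposreal d Hd0). intros s Hs [Is Hst]. apply Hd; auto.
Qed.

Lemma is_derive_has_deriv_within I f t l : is_derive f t l -> has_deriv_within I f t l.
Proof.
  intro H. apply is_derive_Reals in H. apply has_deriv_within_eps. intros eps Heps.
  destruct (H eps Heps) as [d Hd]. exists d; split; [apply cond_pos|].
  intros s _ Hst Hsd.
  specialize (Hd (s - t) ltac:(lra) Hsd). replace (t + (s - t)) with s in Hd by ring. exact Hd.
Qed.

Lemma has_deriv_within_is_derive I f t l :
  locally t I -> has_deriv_within I f t l -> is_derive f t l.
Proof.
  intros [d HI] H. apply is_derive_Reals. rewrite has_deriv_within_eps in H. intros eps Heps.
  destruct (H eps Heps) as [d' [Hd' H']].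
  assert (Hm : 0 < Rmin d d') by (apply Rmin_glb_lt; [apply cond_pos | exact Hd']).
  exists (mkposreal _ Hm). intros h Hh Hhd. simpl in Hhd.
  pose proof (Rmin_l d d'). pose proof (Rmin_r d d').
  specialize (H' (t + h)). replace (t + h - t) with h in H' by ring.
  apply H'; [|lra|lra]. apply HI. change (Rabs (t + h - t) < d).
  replace (t + h - t) with h by ring. lra.
Qed.

Lemma has_deriv_within_ext_loc I J f g t l eps : 0 < eps ->
  (forall s, Rabs (s - t) < eps -> J s -> I s /\ f s = g s) -> f t = g t ->
  has_deriv_within I f t l -> has_deriv_within J g t l.
Proof.
  intros He HJ Ht H. rewrite has_deriv_within_eps in *. intros e He'.
  destruct (H e He') as [d [Hd H']]. exists (Rmin d eps).
  split; [apply Rmin_glb_lt; auto|].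
  intros s Js Hst Hsd. pose proof (Rmin_l d eps). pose proof (Rmin_r d eps).
  destruct (HJ s ltac:(lra) Js) as [Is Hfg]. rewrite <- Hfg, <- Ht. apply H'; auto. lra.
Qed.

Lemma has_deriv_within_continuous I f t l : has_deriv_within I f t l ->
  forall eps, 0 < eps ->
  exists d, 0 < d /\ forall s, I s -> Rabs (s - t) < d -> Rabs (f s - f t) < eps.
Proof.
  rewrite has_deriv_within_eps. intros H eps Heps.
  destruct (H 1 Rlt_0_1) as [d [Hd H']].
  assert (HL : 0 < Rabs l + 1) by (pose proof (Rabs_pos l); lra).
  exists (Rmin d (eps / (Rabs l + 1))).
  split; [apply Rmin_glb_lt; auto; apply Rdiv_lt_0_compat; auto|].
  intros s Is Hsd. pose proof (Rmin_l d (eps / (Rabs l + 1))).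
  pose proof (Rmin_r d (eps / (Rabs l + 1))).
  destruct (Req_dec s t) as [->|Hst]; [rewrite Rminus_eq_0, Rabs_R0; auto|].
  specialize (H' s Is Hst ltac:(lra)).
  assert (Hq : Rabs ((f s - f t) / (s - t)) < Rabs l + 1).
  { pose proof (Rabs_triang_inv ((f s - f t) / (s - t)) l). lra. }
  replace (f s - f t) with ((f s - f t) / (s - t) * (s - t)) by (field; lra).
  rewrite Rabs_mult.
  apply Rle_lt_trans with ((Rabs l + 1) * Rabs (s - t)).
  { apply Rmult_le_compat_r; [apply Rabs_pos | lra]. }
  replace eps with ((Rabs l + 1) * (eps / (Rabs l + 1))) by (field; lra).
  apply Rmult_lt_compat_l; lra.
Qed.

Lemma ex_derive_continuous_eps (f : R -> R) x : ex_derive f x -> forall eps, 0 < eps ->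
  exists d, 0 < d /\ forall y, Rabs (y - x) < d -> Rabs (f y - f x) < eps.
Proof.
  intros [l H] eps Heps.
  destruct (has_deriv_within_continuous (fun _ => True) f x l
              (is_derive_has_deriv_within _ _ _ _ H) eps Heps) as [d [Hd H']].
  exists d; auto.
Qed.

(** * Continuity on a closed interval and mean value estimates *)

Lemma open_oo a b : open (fun x => a < x < b).
Proof. apply open_and; [apply open_gt | apply open_lt]. Qed.

Lemma open_set_open (U : R -> Prop) : open_set U -> open U.
Proof. intros H x Hx. destruct (H x Hx) as [d Hd]. exists d. intros y Hy. apply Hd, Hy. Qed.

Definition continuous_cc (a b : R) (f : R -> R) : Prop :=
  forall x, a <= x <= b -> forall eps, 0 < eps -> exists d, 0 < d /\
    forall y, a <= y <= b -> Rabs (y - x) < d -> Rabs (f y - f x) < eps.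

Lemma continuous_cc_of_ex_derive (f : R -> R) a b :
  (forall x, a <= x <= b -> ex_derive f x) -> continuous_cc a b f.
Proof.
  intros H x Hx eps Heps.
  destruct (ex_derive_continuous_eps f x (H x Hx) eps Heps) as [d [Hd H']]. exists d; auto.
Qed.

Lemma continuous_cc_of_has_deriv_within (I : R -> Prop) (f df : R -> R) a b :
  (forall y, a <= y <= b -> I y) ->
  (forall x, a <= x <= b -> has_deriv_within I f x (df x)) -> continuous_cc a b f.
Proof.
  intros HI H x Hx eps Heps.
  destruct (has_deriv_within_continuous I f x (df x) (H x Hx) eps Heps) as [d [Hd H']].
  exists d; auto.
Qed.

Lemma continuous_cc_subinterval a b a' b' f :
  a <= a' -> b' <= b -> continuous_cc a b f -> continuous_cc a' b' f.
Proof.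
  intros Ha Hb H x Hx eps Heps. destruct (H x ltac:(lra) eps Heps) as [d [Hd H']].
  exists d; split; auto. intros y Hy. apply H'. lra.
Qed.

Lemma continuous_cc_minus a b f g :
  continuous_cc a b f -> continuous_cc a b g -> continuous_cc a b (fun x => f x - g x).
Proof.
  intros Hf Hg x Hx eps Heps.
  destruct (Hf x Hx (eps / 2) ltac:(lra)) as [d1 [Hd1 H1]].
  destruct (Hg x Hx (eps / 2) ltac:(lra)) as [d2 [Hd2 H2]].
  exists (Rmin d1 d2). split; [apply Rmin_glb_lt; auto|].
  intros y Hy Hyx. pose proof (Rmin_l d1 d2). pose proof (Rmin_r d1 d2).
  specialize (H1 y Hy ltac:(lra)). specialize (H2 y Hy ltac:(lra)).
  replace (f y - g y - (f x - g x)) with ((f y - f x) - (g y - g x)) by ring.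
  eapply Rle_lt_trans; [apply Rabs_triang|]. rewrite Rabs_Ropp. lra.
Qed.

(* Composing with the retraction [clamp a b] of R onto [a,b] turns one-sided
   continuity on [a,b] into the two-sided [continuity_pt] of the Stdlib. *)
Definition clamp (a b x : R) : R := Rmax a (Rmin b x).

Lemma clamp_id a b x : a <= x <= b -> clamp a b x = x.
Proof. intros [H1 H2]. unfold clamp. rewrite Rmin_right, Rmax_right; lra. Qed.

Lemma continuity_pt_clamp a b f x : a <= b -> continuous_cc a b f -> a <= x <= b ->
  continuity_pt (fun y => f (clamp a b y)) x.
Proof.
  intros Hab Hc Hx eps Heps. destruct (Hc x Hx eps Heps) as [d [Hd H]].
  exists d; split; auto. intros y [_ Hy]. simpl in *. unfold R_dist in *.
  rewrite (clamp_id a b x Hx). apply H.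
  - unfold clamp, Rmax, Rmin. repeat destruct Rle_dec; lra.
  - eapply Rle_lt_trans; [|exact Hy]. rewrite <- (clamp_id a b x Hx) at 1.
    unfold clamp, Rmax, Rmin. unfold Rabs.
    repeat destruct Rle_dec; repeat destruct Rcase_abs; lra.
Qed.

Lemma continuous_cc_bounded a b f : a <= b -> continuous_cc a b f ->
  exists M, forall x, a <= x <= b -> Rabs (f x) <= M.
Proof.
  intros Hab Hc.
  destruct (continuity_ab_maj (fun y => Rabs (f (clamp a b y))) a b Hab) as [m [Hm _]].
  { intros c Hc'. apply (continuity_pt_comp (fun y => f (clamp a b y)) Rabs).
    - apply continuity_pt_clamp; auto.
    - apply Rcontinuity_abs. }
  exists (Rabs (f (clamp a b m))). intros x Hx. rewrite <- (clamp_id a b x Hx). auto.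
Qed.

Lemma continuous_cc_left_limit (f : R -> R) a b l :
  (forall x, a <= x < b -> ex_derive f x) -> filterlim f (at_left b) (locally l) ->
  continuous_cc a b (fun t => if Rlt_dec t b then f t else l).
Proof.
  intros Hf Hl x Hx eps Heps. destruct (Rlt_dec x b) as [Hxb|Hxb].
  - destruct (ex_derive_continuous_eps f x (Hf x ltac:(lra)) eps Heps) as [d [Hd H]].
    exists (Rmin d (b - x)). split; [apply Rmin_glb_lt; lra|].
    intros y Hy Hyx. pose proof (Rmin_l d (b - x)). pose proof (Rmin_r d (b - x)).
    apply Rabs_def2 in Hyx as Hyx'.
    destruct (Rlt_dec y b); [apply H; lra | lra].
  - replace x with b in * by lra.
    rewrite filterlim_locally in Hl. destruct (Hl (mkposreal eps Heps)) as [d Hd].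
    exists d. split; [apply cond_pos|].
    intros y Hy Hyx. destruct (Rlt_dec y b).
    + apply (Hd y); [apply Hyx | auto].
    + rewrite Rminus_eq_0, Rabs_R0. auto.
Qed.

Lemma lt_left_limit_of_incr (f : R -> R) a b l :
  (forall x y, a < x -> x < y -> y < b -> f x < f y) -> filterlim f (at_left b) (locally l) ->
  forall x, a < x < b -> f x < l.
Proof.
  intros Hinc Hl x Hx. destruct (Rlt_le_dec (f x) l) as [|Hge]; auto. exfalso.
  set (s := (x + b) / 2).
  assert (Hs : l < f s) by (apply Rle_lt_trans with (f x); [lra | apply Hinc; unfold s; lra]).
  rewrite filterlim_locally in Hl. destruct (Hl (mkposreal (f s - l) ltac:(lra))) as [d Hd].
  pose proof (cond_pos d).
  pose proof (Rmax_l ((s + b) / 2) (b - d / 2)). pose proof (Rmax_r ((s + b) / 2) (b - d / 2)).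
  set (y := Rmax ((s + b) / 2) (b - d / 2)) in *.
  assert (Hyb : y < b) by (apply Rmax_lub_lt; unfold s; lra).
  assert (Hfy : f s < f y) by (apply Hinc; unfold s in *; lra).
  assert (Hfyl : Rabs (f y - l) < f s - l).
  { apply (Hd y); auto. change (Rabs (y - b) < d). apply Rabs_def1; lra. }
  apply Rabs_def2 in Hfyl. lra.
Qed.

Lemma at_left_window b (P : R -> Prop) : at_left b P ->
  exists d, 0 < d /\ forall s, b - d < s < b -> P s.
Proof.
  intros [d Hd]. exists d. split; [apply cond_pos|].
  intros s Hs. apply Hd; [|lra]. change (Rabs (s - b) < d). apply Rabs_def1; lra.
Qed.

Lemma MVT_cc (f df : R -> R) a b : a < b ->
  (forall x, a < x < b -> is_derive f x (df x)) -> continuous_cc a b f ->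
  exists c, a < c < b /\ f b - f a = df c * (b - a).
Proof.
  intros Hab Hd Hc.
  (* [MVT_gen] may return an endpoint, where [df] says nothing; [df'] sends the
     endpoints to an interior value of [df]. *)
  set (m := (a + b) / 2).
  set (df' := fun x => if Rlt_dec a x then if Rlt_dec x b then df x else df m else df m).
  assert (Hdf' : forall x, a <= x <= b -> exists c, a < c < b /\ df' x = df c).
  { intros x Hx. unfold df'.
    destruct (Rlt_dec a x); [destruct (Rlt_dec x b)|];
      [exists x | exists m | exists m]; unfold m; split; auto; lra. }
  destruct (MVT_gen (fun x => f (clamp a b x)) a b df') as [c [Hc1 Hc2]];
    rewrite Rmin_left, Rmax_right in * by lra.
  - intros x Hx. unfold df'. do 2 (destruct Rlt_dec; [|lra]).
    apply is_derive_ext_loc with f; [|apply Hd; auto].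
    apply locally_open with (fun y => a < y < b); [apply open_oo | | auto].
    intros y Hy. rewrite clamp_id; lra.
  - intros x Hx. apply continuity_pt_clamp; auto; lra.
  - rewrite !clamp_id in Hc2 by lra. destruct (Hdf' c Hc1) as [c' [Hc' Hdc']].
    exists c'. rewrite <- Hdc'. auto.
Qed.

Lemma mean_value_bound (f df : R -> R) a b t0 C : a <= t0 <= b ->
  (forall x, a < x < b -> is_derive f x (df x)) -> continuous_cc a b f ->
  (forall x, a < x < b -> Rabs (df x) <= C) ->
  forall t, a <= t <= b -> Rabs (f t - f t0) <= C * Rabs (t - t0).
Proof.
  intros Ht0 Hd Hc HC.
  assert (Hle : forall u v, a <= u <= v -> v <= b -> Rabs (f v - f u) <= C * (v - u)).
  { intros u v Hu Hv. destruct (Req_dec u v) as [<-|Huv].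
    { rewrite !Rminus_eq_0, Rabs_R0. lra. }
    destruct (MVT_cc f df u v) as [c [Hc1 ->]]; try lra.
    - intros x Hx. apply Hd. lra.
    - apply continuous_cc_subinterval with a b; lra || auto.
    - rewrite Rabs_mult, (Rabs_right (v - u)) by lra.
      apply Rmult_le_compat_r; [lra | apply HC; lra]. }
  intros t Ht. destruct (Rle_dec t0 t).
  - rewrite (Rabs_right (t - t0)) by lra. apply Hle; lra.
  - rewrite (Rabs_minus_sym (f t)), (Rabs_minus_sym t), (Rabs_right (t0 - t)) by lra.
    apply Hle; lra.
Qed.

Lemma strict_incr_open (f df : R -> R) a b :
  (forall x, a < x < b -> is_derive f x (df x) /\ 0 < df x) ->
  forall x y, a < x -> x < y -> y < b -> f x < f y.
Proof.
  intros H x y Hx Hxy Hy.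
  destruct (MVT_cc f df x y) as [c [Hc Hmvt]]; auto.
  - intros z Hz. apply H. lra.
  - apply continuous_cc_of_ex_derive. intros z Hz. exists (df z). apply H. lra.
  - assert (0 < df c * (y - x)) by (apply Rmult_lt_0_compat; [apply H|]; lra). lra.
Qed.

Lemma lipschitz_of_Derive_bound (f : R -> R) a b K :
  (forall x, a < x < b -> ex_derive f x /\ Rabs (Derive f x) <= K) ->
  forall x y, a < x < b -> a < y < b -> Rabs (f x - f y) <= K * Rabs (x - y).
Proof.
  intros H x y Hx Hy.
  pose proof (Rmin_l x y). pose proof (Rmin_r x y).
  pose proof (Rmax_l x y). pose proof (Rmax_r x y).
  assert (Hmin : a < Rmin x y) by (apply Rmin_glb_lt; lra).
  assert (Hmax : Rmax x y < b) by (apply Rmax_lub_lt; lra).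
  apply (mean_value_bound f (Derive f) (Rmin x y) (Rmax x y)); try lra.
  - intros z Hz. apply Derive_correct, H. lra.
  - apply continuous_cc_of_ex_derive. intros z Hz. apply H. lra.
  - intros z Hz. apply H. lra.
Qed.

Lemma lipschitz_of_Derive_bound_R (f : R -> R) K :
  (forall x, ex_derive f x /\ Rabs (Derive f x) <= K) ->
  forall x y, Rabs (f x - f y) <= K * Rabs (x - y).
Proof.
  intros H x y. apply (lipschitz_of_Derive_bound f (Rmin x y - 1) (Rmax x y + 1)).
  - intros z _. apply H.
  - pose proof (Rmin_l x y). pose proof (Rmax_l x y). lra.
  - pose proof (Rmin_r x y). pose proof (Rmax_r x y). lra.
Qed.

Lemma le_geometric_eq0 z M : 0 <= z -> (forall m, z <= M * (/ 2) ^ m) -> z = 0.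
Proof.
  intros Hz H. destruct (Rle_lt_or_eq_dec 0 z Hz) as [Hlt|]; auto. exfalso.
  assert (HM : 0 < M) by (specialize (H 0%nat); simpl in H; lra).
  destruct (pow_lt_1_zero (/ 2) ltac:(rewrite Rabs_right; lra) (z / M)) as [N HN].
  { apply Rdiv_lt_0_compat; auto. }
  specialize (HN N (le_n N)). specialize (H N).
  rewrite Rabs_right in HN by (apply Rle_ge, pow_le; lra).
  apply (Rmult_lt_compat_l M) in HN; auto.
  replace (M * (z / M)) with z in HN by (field; lra). lra.
Qed.

Lemma mul_lt_of_lt_div_succ (K a d : R) : 0 <= K -> 0 < a -> 0 <= d -> d < a / (K + 1) ->
  K * d < a.
Proof.
  intros HK Ha Hd0 Hd.
  apply Rmult_lt_compat_l with (r := K + 1) in Hd; [|lra].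
  replace ((K + 1) * (a / (K + 1))) with a in Hd by (field; lra). nra.
Qed.

Lemma gronwall_pair_zero (f g df dg : R -> R) a b t0 K : a <= t0 <= b -> f t0 = 0 -> g t0 = 0 ->
  (forall x, a < x < b -> is_derive f x (df x) /\ is_derive g x (dg x)) ->
  continuous_cc a b f -> continuous_cc a b g ->
  (forall x, a < x < b -> Rabs (df x) <= K * Rabs (g x) /\ Rabs (dg x) <= K * Rabs (f x)) ->
  0 <= K -> K * (b - a) <= 1 / 2 ->
  forall x, a <= x <= b -> f x = 0 /\ g x = 0.
Proof.
  intros Ht0 Hf0 Hg0 Hd Hcf Hcg HK HK0 HKb.
  destruct (continuous_cc_bounded a b f ltac:(lra) Hcf) as [Mf HMf].
  destruct (continuous_cc_bounded a b g ltac:(lra) Hcg) as [Mg HMg].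
  set (M := Rmax Mf Mg).
  (* Each pass through the mean value bound halves a common bound of |f| and |g|. *)
  assert (halve : forall (u du v : R -> R) (B : R), u t0 = 0 -> continuous_cc a b u ->
     (forall y, a < y < b -> is_derive u y (du y)) ->
     (forall y, a < y < b -> Rabs (du y) <= K * Rabs (v y)) ->
     (forall y, a <= y <= b -> Rabs (v y) <= B) ->
     forall x, a <= x <= b -> Rabs (u x) <= / 2 * B).
  { intros u du v B Hu0 Hcu Hdu Huv HvB x Hx.
    assert (HB : 0 <= B) by (eapply Rle_trans; [apply Rabs_pos | apply (HvB t0 Ht0)]).
    replace (u x) with (u x - u t0) by (rewrite Hu0; ring).
    eapply Rle_trans.
    - apply (mean_value_bound u du a b t0 (K * B)); auto.
      intros y Hy. eapply Rle_trans; [apply Huv; auto|].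
      apply Rmult_le_compat_l; auto. apply HvB. lra.
    - assert (Rabs (x - t0) <= b - a) by (apply Rabs_le; lra).
      assert (K * Rabs (x - t0) <= 1 / 2) by nra. nra. }
  assert (Hgeom : forall m x, a <= x <= b ->
     Rabs (f x) <= M * (/ 2) ^ m /\ Rabs (g x) <= M * (/ 2) ^ m).
  { induction m as [|m IH]; intros x Hx.
    - simpl. rewrite Rmult_1_r. unfold M.
      split; eapply Rle_trans; [apply HMf; auto | apply Rmax_l | apply HMg; auto | apply Rmax_r].
    - replace (M * (/ 2) ^ S m) with (/ 2 * (M * (/ 2) ^ m)) by (simpl; ring).
      split.
      + apply (halve f df g); auto; intros y Hy; [apply Hd | apply HK | apply IH]; auto.
      + apply (halve g dg f); auto; intros y Hy; [apply Hd | apply HK | apply IH]; auto. }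
  intros x Hx. split; apply Rabs_eq_0, (le_geometric_eq0 _ M); try apply Rabs_pos;
    intro m; apply Hgeom; auto.
Qed.

(** * Smoothness on open sets *)

Definition Cn (k : nat) (O : R -> Prop) (f : R -> R) : Prop :=
  forall j x, (j <= k)%nat -> O x -> ex_derive (Derive_n f j) x.

Definition Cinf (O : R -> Prop) (f : R -> R) : Prop :=
  forall k x, O x -> ex_derive (Derive_n f k) x.

Lemma Derive_n_S_Derive f j x : Derive_n f (S j) x = Derive_n (Derive f) j x.
Proof.
  revert x; induction j as [|j IH]; intro x; [reflexivity|].
  apply Derive_ext. exact IH.
Qed.

Lemma Cn_0 O f : Cn 0 O f <-> forall x, O x -> ex_derive f x.
Proof.
  split; [intros H x Hx; apply (H 0%nat x); auto|].
  intros H j x Hj Hx. replace j with 0%nat by lia. apply H; auto.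
Qed.

Lemma Cn_S k O f : Cn (S k) O f <-> (forall x, O x -> ex_derive f x) /\ Cn k O (Derive f).
Proof.
  split.
  - intros H. split; [intros x Hx; apply (H 0%nat x); auto; lia|].
    intros j x Hj Hx. apply ex_derive_ext with (Derive_n f (S j)).
    + intro t. apply Derive_n_S_Derive.
    + apply H; auto. lia.
  - intros [H1 H2] j x Hj Hx. destruct j as [|j]; [apply H1; auto|].
    apply ex_derive_ext with (Derive_n (Derive f) j).
    + intro t. symmetry. apply Derive_n_S_Derive.
    + apply H2; auto. lia.
Qed.

Lemma Cn_S_Cn k O f : Cn (S k) O f -> Cn k O f.
Proof. intros H j x Hj Hx. apply H; auto. Qed.

Lemma Cinf_Cn O f : Cinf O f <-> forall k, Cn k O f.
Proof.
  split; [intros H k j x _ Hx; apply H; auto|].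
  intros H k x Hx. apply (H k k x); auto.
Qed.

Lemma Cn_ext k O f g : open O -> (forall x, O x -> f x = g x) -> Cn k O f -> Cn k O g.
Proof.
  intros HO Hfg H j x Hj Hx. apply ex_derive_ext_loc with (Derive_n f j).
  - apply locally_open with O; auto. intros y Hy. apply Derive_n_ext_loc.
    apply locally_open with O; auto.
  - apply H; auto.
Qed.

Lemma Cinf_subset (O O' : R -> Prop) f : (forall x, O' x -> O x) -> Cinf O f -> Cinf O' f.
Proof. intros H Hf k x Hx. apply Hf. auto. Qed.

Lemma Cinf_Derive O f : Cinf O f -> Cinf O (Derive f).
Proof.
  intros H k x Hx. apply ex_derive_ext with (Derive_n f (S k)).
  - intro. apply Derive_n_S_Derive.
  - apply H; auto.
Qed.

Lemma Cn_const k O (c : R) : open O -> Cn k O (fun _ => c).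
Proof.
  intros HO. revert c. induction k as [|k IH]; intro c.
  - apply Cn_0. intros. apply ex_derive_const.
  - apply Cn_S. split; [intros; apply ex_derive_const|].
    apply Cn_ext with (fun _ => 0); auto. intros. rewrite Derive_const; auto.
Qed.

Lemma Cn_plus k O f g : open O -> Cn k O f -> Cn k O g -> Cn k O (fun x => f x + g x).
Proof.
  intros HO. revert f g; induction k as [|k IH]; intros f g Hf Hg.
  - rewrite Cn_0 in *. intros. apply (ex_derive_plus f g); auto.
  - apply Cn_S. apply Cn_S in Hf as [Hf1 Hf2]. apply Cn_S in Hg as [Hg1 Hg2]. split.
    + intros. apply (ex_derive_plus f g); auto.
    + apply Cn_ext with (fun x => Derive f x + Derive g x); auto.
      intros. rewrite Derive_plus; auto.
Qed.

Lemma Cn_mult k O f g : open O -> Cn k O f -> Cn k O g -> Cn k O (fun x => f x * g x).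
Proof.
  intros HO. revert f g; induction k as [|k IH]; intros f g Hf Hg.
  - rewrite Cn_0 in *. intros. apply ex_derive_mult; auto.
  - pose proof (Cn_S_Cn _ _ _ Hf) as Hf'. pose proof (Cn_S_Cn _ _ _ Hg) as Hg'.
    apply Cn_S. apply Cn_S in Hf as [Hf1 Hf2]. apply Cn_S in Hg as [Hg1 Hg2]. split.
    + intros. apply ex_derive_mult; auto.
    + apply Cn_ext with (fun x => Derive f x * g x + f x * Derive g x); auto.
      * intros. rewrite Derive_mult; auto.
      * apply Cn_plus; auto.
Qed.

Lemma Cn_inv k O f : open O -> Cn k O f -> (forall x, O x -> f x <> 0) ->
  Cn k O (fun x => / f x).
Proof.
  intros HO. revert f; induction k as [|k IH]; intros f Hf Hnz.
  - rewrite Cn_0 in *. intros. apply ex_derive_inv; auto.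
  - pose proof (Cn_S_Cn _ _ _ Hf) as Hf'.
    apply Cn_S. apply Cn_S in Hf as [Hf1 Hf2]. split.
    + intros. apply ex_derive_inv; auto.
    + apply Cn_ext with (fun x => (-1 * Derive f x) * (/ f x * / f x)); auto.
      * intros. rewrite Derive_inv; auto. field. auto.
      * apply Cn_mult; [auto | apply Cn_mult; auto; apply Cn_const; auto |].
        apply Cn_mult; auto.
Qed.

Lemma Cn_comp k O O' f g : open O -> Cinf O' f -> (forall x, O x -> O' (g x)) ->
  Cn k O g -> Cn k O (fun x => f (g x)).
Proof.
  intros HO. revert f; induction k as [|k IH]; intros f Hf HOg Hg.
  - rewrite Cn_0 in *. intros. apply ex_derive_comp; auto. apply (Hf 0%nat); auto.
  - pose proof (Cn_S_Cn _ _ _ Hg) as Hg'.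
    apply Cn_S. apply Cn_S in Hg as [Hg1 Hg2]. split.
    + intros. apply ex_derive_comp; auto. apply (Hf 0%nat); auto.
    + apply Cn_ext with (fun x => Derive g x * Derive f (g x)); auto.
      * intros. rewrite (Derive_comp f g); auto. apply (Hf 0%nat); auto.
      * apply Cn_mult; auto. apply IH; auto. apply Cinf_Derive; auto.
Qed.

Lemma Cinf_comp O O' f g : open O -> Cinf O' f -> (forall x, O x -> O' (g x)) ->
  Cinf O g -> Cinf O (fun x => f (g x)).
Proof.
  intros. apply Cinf_Cn. intro k. apply Cn_comp with O'; auto. apply Cinf_Cn; auto.
Qed.

Lemma Cinf_plus O f g : open O -> Cinf O f -> Cinf O g -> Cinf O (fun x => f x + g x).
Proof. intros. apply Cinf_Cn. intro k. apply Cn_plus; auto; apply Cinf_Cn; auto. Qed.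

Lemma Cinf_const O c : open O -> Cinf O (fun _ => c).
Proof. intros. apply Cinf_Cn. intro k. apply Cn_const; auto. Qed.

Lemma Cinf_inv O f : open O -> Cinf O f -> (forall x, O x -> f x <> 0) ->
  Cinf O (fun x => / f x).
Proof. intros. apply Cinf_Cn. intro k. apply Cn_inv; auto; apply Cinf_Cn; auto. Qed.

Lemma Cinf_opp O f : open O -> Cinf O f -> Cinf O (fun x => - f x).
Proof.
  intros HO Hf. apply Cinf_Cn. intro k.
  apply Cn_ext with (fun x => -1 * f x); [auto | intros; ring |].
  apply Cn_mult; auto; [apply Cn_const | apply Cinf_Cn]; auto.
Qed.

Lemma Cinf_of_is_derive O G h : open O ->
  (forall x, O x -> is_derive G x (h x)) -> Cinf O h -> Cinf O G.
Proof.
  intros HO Hd Hh. apply Cinf_Cn. intros [|k].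
  - apply Cn_0. intros. eexists; apply Hd; auto.
  - apply Cn_S. split; [intros; eexists; apply Hd; auto|].
    apply Cn_ext with h; auto.
    + intros. symmetry. apply is_derive_unique. apply Hd; auto.
    + apply Cinf_Cn; auto.
Qed.

Lemma Cinf_shift O c : open O -> Cinf O (fun t => t - c).
Proof.
  intros HO. apply Cinf_of_is_derive with (fun _ => 1); auto; [|apply Cinf_const; auto].
  intros x _. auto_derive; auto.
Qed.

Lemma Cinf_smooth_on (O I : R -> Prop) f :
  Cinf O f -> (forall t, I t -> O t) -> smooth_on I f.
Proof.
  intros H HI. exists (Derive_n f). split; [reflexivity|].
  intros k t It. apply is_derive_has_deriv_within, Derive_correct, H; auto.
Qed.

Lemma smooth_on_Derive_n (O : R -> Prop) f (D : nat -> R -> R) : open O ->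
  (forall t, O t -> D 0%nat t = f t) ->
  (forall k t, O t -> is_derive (D k) t (D (S k) t)) ->
  forall k t, O t -> Derive_n f k t = D k t.
Proof.
  intros HO H0 HD. induction k as [|k IH]; intros x Hx; [symmetry; auto|].
  simpl. rewrite (Derive_ext_loc _ (D k)); [apply is_derive_unique; auto|].
  apply locally_open with O; auto.
Qed.

Lemma smooth_on_Cinf (O : R -> Prop) f : open O -> smooth_on O f -> Cinf O f.
Proof.
  intros HO [D [H0 HD]].
  assert (HD' : forall k t, O t -> is_derive (D k) t (D (S k) t)).
  { intros k t Ht. apply has_deriv_within_is_derive with O; auto. }
  intros k x Hx. apply ex_derive_ext_loc with (D k).
  - apply locally_open with O; auto. intros. symmetry.
    apply smooth_on_Derive_n with O; auto.
  - eexists. apply HD'. auto.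
Qed.

Lemma smooth_bounded_Derive_lipschitz (W : R -> R) : smooth W ->
  (forall k, (1 <= k)%nat -> exists C, forall x, Rabs (Derive_n W k x) <= C) ->
  exists C1 C2, 0 <= C1 /\ 0 <= C2 /\ (forall x, Rabs (Derive W x) <= C1) /\
    forall x y, Rabs (Derive W x - Derive W y) <= C2 * Rabs (x - y).
Proof.
  intros HW HWb.
  destruct (HWb 1%nat) as [C1 HC1]; [lia|]. destruct (HWb 2%nat) as [C2 HC2]; [lia|].
  exists C1, C2. split; [eapply Rle_trans; [apply Rabs_pos | apply (HC1 0)]|].
  split; [eapply Rle_trans; [apply Rabs_pos | apply (HC2 0)]|]. split; [exact HC1|].
  apply lipschitz_of_Derive_bound_R. intros x. split; [apply (HW 2%nat) | apply HC2].
Qed.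

Lemma Cinf_Derive_lipschitz_near (O : R -> Prop) e x0 : open O -> Cinf O e -> O x0 ->
  exists r Lam, 0 < r /\ 0 <= Lam /\ (forall x, Rabs (x - x0) < r -> O x) /\
    forall x y, Rabs (x - x0) < r -> Rabs (y - x0) < r ->
      Rabs (Derive e x - Derive e y) <= Lam * Rabs (x - y).
Proof.
  intros HO He Hx0. destruct (HO x0 Hx0) as [r0 Hr0].
  destruct (ex_derive_continuous_eps (Derive (Derive e)) x0 (He 2%nat x0 Hx0) 1 Rlt_0_1)
    as [r2 [Hr2 He2]].
  pose proof (cond_pos r0). pose proof (Rmin_l r0 r2). pose proof (Rmin_r r0 r2).
  set (r := Rmin r0 r2) in *.
  assert (HrO : forall x, Rabs (x - x0) < r -> O x).
  { intros x Hx. apply Hr0. apply (Rlt_le_trans _ r); auto. }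
  exists r, (Rabs (Derive (Derive e) x0) + 1).
  split; [apply Rmin_glb_lt; auto|]. split; [pose proof (Rabs_pos (Derive (Derive e) x0)); lra|].
  split; auto. intros x y Hx Hy. apply Rabs_def2 in Hx. apply Rabs_def2 in Hy.
  apply (lipschitz_of_Derive_bound (Derive e) (x0 - r) (x0 + r)); try lra.
  intros z Hz. assert (Hzr : Rabs (z - x0) < r) by (apply Rabs_def1; lra).
  split; [apply (He 1%nat), HrO, Hzr|].
  specialize (He2 z ltac:(lra)).
  pose proof (Rabs_triang_inv (Derive (Derive e) z) (Derive (Derive e) x0)). lra.
Qed.

Lemma glue_smooth (x xh : R -> R) tstar delta T h :
  0 < delta < tstar -> tstar + delta <= T -> delta < h -> T < tstar + h ->
  Cinf (fun t => tstar - h < t < tstar + h) xh -> smooth_on (fun t => 0 <= t < tstar) x ->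
  (forall t, tstar - delta <= t < tstar -> x t = xh t) ->
  smooth_on (fun t => 0 <= t <= T) (glue tstar delta x xh xh).
Proof.
  intros Hd HT Hh1 Hh2 Sxh [Dx [Hx0 HDx]] Hxeq.
  assert (HDxh : forall k t, tstar - delta < t < tstar -> Dx k t = Derive_n xh k t).
  { intros k t Ht. rewrite <- (smooth_on_Derive_n (fun t => 0 < t < tstar) x Dx);
      [| apply open_oo | intros; apply Hx0; lra | | lra].
    - apply Derive_n_ext_loc. apply locally_open with (fun t => tstar - delta < t < tstar);
        [apply open_oo | | auto]. intros; apply Hxeq; lra.
    - intros k' t' Ht'. apply has_deriv_within_is_derive with (fun t => 0 <= t < tstar);
        [|apply HDx; lra].
      apply locally_open with (fun t => 0 < t < tstar); [apply open_oo | intros; lra | auto]. }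
  exists (fun k t => if Rlt_dec t tstar then Dx k t else Derive_n xh k t). split.
  - intros t Ht. unfold glue. destruct (Rlt_dec t tstar).
    + rewrite Hx0 by lra. destruct Rle_dec; auto. destruct Rle_dec; [|lra]. apply Hxeq. lra.
    + destruct Rle_dec; [lra|]. destruct Rle_dec; reflexivity.
  - intros k t Ht. destruct (Rlt_dec t tstar) as [Hlt|Hge].
    + apply has_deriv_within_ext_loc with (fun t => 0 <= t < tstar) (Dx k) (tstar - t); [lra| | |].
      * intros s Hs Hs'. apply Rabs_def2 in Hs. split; [lra|]. destruct Rlt_dec; [reflexivity|lra].
      * destruct Rlt_dec; [reflexivity|lra].
      * apply HDx. lra.
    + apply has_deriv_within_ext_loc with (fun t => 0 <= t <= T) (Derive_n xh k) delta; [lra| | |].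
      * intros s Hs Hs'. apply Rabs_def2 in Hs. split; auto.
        destruct Rlt_dec; [symmetry; apply HDxh; lra | reflexivity].
      * destruct Rlt_dec; [lra|reflexivity].
      * apply is_derive_has_deriv_within, Derive_correct, Sxh. lra.
Qed.

(** * Smooth local inverses *)

Lemma is_derive_local_inverse (f : R -> R) a0 a b b0 : a0 < a -> a < b -> b < b0 ->
  (forall x, a0 < x < b0 -> ex_derive f x /\ 0 < Derive f x) ->
  exists g, (forall x, a <= x <= b -> g (f x) = x) /\
    forall y, f a < y < f b -> a < g y < b /\ is_derive g y (/ Derive f (g y)).
Proof.
  intros Ha Hab Hb Hf.
  assert (Hinc : forall x y, a0 < x -> x < y -> y < b0 -> f x < f y).
  { apply strict_incr_open with (Derive f). intros x Hx.
    split; [apply Derive_correct|]; apply Hf; auto. }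
  assert (Hcont : forall x, a <= x <= b -> continuity_pt f x).
  { intros x Hx. apply continuity_pt_filterlim, (ex_derive_continuous f x), Hf. lra. }
  set (g := fun y => epsilon (inhabits 0) (fun x => a <= x <= b /\ f x = y)).
  assert (Hg : forall y, f a <= y <= f b -> a <= g y <= b /\ f (g y) = y).
  { intros y Hy. unfold g. apply epsilon_spec.
    destruct (f_interv_is_interv f a b y) as [x Hx]; auto. exists x; auto. }
  assert (Hgf : forall x, a <= x <= b -> g (f x) = x).
  { intros x Hx. destruct (Hg (f x)) as [H1 H2].
    - split; destruct (Req_dec a x), (Req_dec x b); subst; try lra;
        left; apply Hinc; lra.
    - destruct (Rtotal_order (g (f x)) x) as [H|[H|H]]; auto;
        apply Hinc in H; lra. }
  exists g. split; auto. intros y Hy.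
  destruct (Hg y ltac:(lra)) as [H1 H2].
  assert (Hgi : a < g y < b).
  { split; [destruct H1 as [[H1|H1] _] | destruct H1 as [_ [H1|H1]]]; auto;
      [rewrite <- H1 in H2 | rewrite H1 in H2]; lra. }
  split; auto.
  assert (Prf : forall z, g (f a) <= z <= g (f b) -> derivable_pt f z).
  { intros z Hz. rewrite !Hgf in Hz by lra.
    exists (Derive f z). apply is_derive_Reals, Derive_correct, Hf. lra. }
  assert (Prg : continuity_pt g y).
  { apply continuity_pt_recip_interv with f a b; auto.
    - intros. apply Hinc; lra.
    - intros. unfold comp, id. apply Hg. lra.
    - intros. apply Hg. lra. }
  assert (Hincr : g (f a) <= g y <= g (f b)) by (rewrite !Hgf; lra).
  assert (Hfab : f a < f b) by lra.
  pose proof (derivable_pt_lim_recip_interv f g (f a) (f b) y Prf Prg Hfab Hy Hincr) as HH.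
  apply is_derive_Reals.
  replace (/ Derive f (g y)) with (1 / derive_pt f (g y) (Prf (g y) Hincr)).
  - apply HH; [intros; unfold comp, id; apply Hg; lra|].
    rewrite (derive_pt_eq_0 _ _ (Derive f (g y))).
    + assert (0 < Derive f (g y)) by (apply Hf; lra). lra.
    + apply is_derive_Reals, Derive_correct, Hf. lra.
  - rewrite (derive_pt_eq_0 _ _ (Derive f (g y))); [unfold Rdiv; ring|].
    apply is_derive_Reals, Derive_correct, Hf. lra.
Qed.

Lemma Cinf_local_inverse f x0 d : 0 < d ->
  Cinf (fun x => x0 - d < x < x0 + d) f ->
  (forall x, x0 - d < x < x0 + d -> 0 < Derive f x) ->
  exists A B g, A < f x0 < B /\ g (f x0) = x0 /\ Cinf (fun y => A < y < B) g /\
    forall y, A < y < B -> x0 - d < g y < x0 + d /\ is_derive g y (/ Derive f (g y)).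
Proof.
  intros Hd Sf Hpos.
  assert (Hf : forall x, x0 - d < x < x0 + d -> ex_derive f x /\ 0 < Derive f x).
  { intros x Hx. split; [apply (Sf 0%nat)|apply Hpos]; auto. }
  destruct (is_derive_local_inverse f (x0 - d) (x0 - d / 2) (x0 + d / 2) (x0 + d))
    as [g [Hgf Hg]]; try lra; auto.
  assert (Hinc : forall x y, x0 - d < x -> x < y -> y < x0 + d -> f x < f y).
  { apply strict_incr_open with (Derive f). intros x Hx.
    split; [apply Derive_correct|]; apply Hf; auto. }
  set (O := fun y => f (x0 - d / 2) < y < f (x0 + d / 2)).
  assert (HO : open O) by apply open_oo.
  assert (Hrange : forall y, O y -> x0 - d < g y < x0 + d).
  { intros y Hy. destruct (Hg y Hy) as [H _]. lra. }
  exists (f (x0 - d / 2)), (f (x0 + d / 2)), g.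
  split; [split; apply Hinc; lra|]. split; [apply Hgf; lra|].
  split; [|intros y Hy; split; [apply Hrange | apply Hg]; auto].
  (* g' = 1 / (f' o g): each derivative of g is a smooth expression in lower ones. *)
  apply Cinf_Cn. intro k. induction k as [|k IH].
  - apply Cn_0. intros y Hy. eexists. apply Hg. auto.
  - apply Cn_S. split; [intros y Hy; eexists; apply Hg; auto|].
    apply Cn_ext with (fun y => / Derive f (g y)); auto.
    + intros y Hy. symmetry. apply is_derive_unique, Hg. auto.
    + apply Cn_inv; auto.
      * apply Cn_comp with (O' := fun x => x0 - d < x < x0 + d); auto.
        apply Cinf_Derive; auto.
      * intros y Hy. apply Rgt_not_eq, Hpos, Hrange. auto.
Qed.

(** * The Hamiltonian flow through the crossing point *)

(* On the energy level e(p) + W(q) = e(pstar) + W(qstar), solved for q near qstar. *)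
Lemma energy_level_curve (e W : R -> R) pstar qstar rho : 0 < rho ->
  Cinf (fun p => pstar - rho < p < pstar + rho) e -> Cinf (fun _ => True) W ->
  Derive W qstar < 0 ->
  exists rho1 Q, 0 < rho1 <= rho /\ Q pstar = qstar /\
    Cinf (fun p => pstar - rho1 < p < pstar + rho1) Q /\
    forall p, pstar - rho1 < p < pstar + rho1 ->
      0 < - Derive W (Q p) /\ is_derive Q p (Derive e p / - Derive W (Q p)).
Proof.
  intros Hrho He HW HWs.
  destruct (ex_derive_continuous_eps (Derive W) qstar (HW 1%nat qstar I) (- Derive W qstar))
    as [d1 [Hd1 HW1]]; [lra|].
  assert (HWneg : forall x, qstar - d1 < x < qstar + d1 -> Derive W x < 0).
  { intros x Hx. specialize (HW1 x ltac:(apply Rabs_def1; lra)).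
    apply Rabs_def2 in HW1. lra. }
  set (f1 := fun x => - W x).
  assert (Hf1 : forall x, Derive f1 x = - Derive W x) by (intros; apply Derive_opp).
  destruct (Cinf_local_inverse f1 qstar d1) as [A1 [B1 [g1 [HA1B1 [Hg1q [Sg1 Hg1]]]]]]; auto.
  { apply Cinf_subset with (fun _ => True); auto.
    apply Cinf_opp; [apply open_true | exact HW]. }
  { intros x Hx. rewrite Hf1. specialize (HWneg x Hx). lra. }
  set (c := e pstar + W qstar).
  assert (Hc : e pstar - c = f1 qstar) by (unfold c, f1; ring).
  set (eps2 := Rmin (f1 qstar - A1) (B1 - f1 qstar)).
  assert (Heps2 : 0 < eps2) by (apply Rmin_glb_lt; lra).
  destruct (ex_derive_continuous_eps e pstar (He 0%nat pstar ltac:(lra)) eps2 Heps2)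
    as [d2 [Hd2 He2]].
  pose proof (Rmin_l rho d2) as Hrho1a. pose proof (Rmin_r rho d2) as Hrho1b.
  set (rho1 := Rmin rho d2) in *.
  set (P1 := fun p => pstar - rho1 < p < pstar + rho1).
  assert (HP1 : open P1) by apply open_oo.
  assert (HeP1 : forall p, P1 p -> A1 < e p - c < B1).
  { intros p Hp. specialize (He2 p ltac:(apply Rabs_def1; unfold P1 in Hp; lra)).
    apply Rabs_def2 in He2.
    assert (eps2 <= f1 qstar - A1 /\ eps2 <= B1 - f1 qstar) by (split; [apply Rmin_l | apply Rmin_r]).
    lra. }
  exists rho1, (fun p => g1 (e p - c)).
  split; [split; [apply Rmin_glb_lt|]; lra|].
  split; [rewrite Hc; exact Hg1q|].
  split.
  { apply (Cinf_comp P1 (fun y => A1 < y < B1) g1 (fun p => e p - c)); auto.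
    apply Cinf_plus; auto; [|apply Cinf_const; auto].
    apply Cinf_subset with (fun p => pstar - rho < p < pstar + rho); auto.
    unfold P1. intros; lra. }
  intros p Hp. destruct (Hg1 (e p - c) (HeP1 p Hp)) as [Hg1r Hg1d]. split.
  - specialize (HWneg _ Hg1r). lra.
  - replace (Derive e p / - Derive W (g1 (e p - c)))
      with (Derive e p * / Derive f1 (g1 (e p - c))) by (rewrite Hf1; reflexivity).
    apply (is_derive_comp g1 (fun p => e p - c)); auto.
    auto_derive; [apply (He 0%nat); unfold P1 in Hp; lra | apply Rmult_1_l].
Qed.

Lemma autonomous_ode_solution (F : R -> R) pstar rho tstar : 0 < rho ->
  Cinf (fun p => pstar - rho < p < pstar + rho) F ->
  (forall p, pstar - rho < p < pstar + rho -> 0 < F p) ->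
  exists h ph, 0 < h /\ ph tstar = pstar /\ Cinf (fun t => tstar - h < t < tstar + h) ph /\
    forall t, tstar - h < t < tstar + h ->
      Rabs (ph t - pstar) < rho /\ is_derive ph t (F (ph t)).
Proof.
  intros Hrho SF HF.
  set (P := fun p => pstar - rho < p < pstar + rho).
  assert (HP : open P) by apply open_oo.
  set (iF := fun p => / F p).
  assert (SiF : Cinf P iF).
  { apply Cinf_inv; auto. intros p Hp. apply Rgt_not_eq, HF, Hp. }
  assert (ciF : forall z, P z -> continuous iF z).
  { intros z Hz. apply continuity_pt_filterlim, continuity_pt_filterlim.
    apply (ex_derive_continuous iF z), (SiF 0%nat); auto. }
  (* Separation of variables: G(p) = int_pstar^p dp / F(p) and ph(t) = G^-1(t - tstar). *)
  set (G := fun p => RInt iF pstar p).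
  assert (HGd : forall p, P p -> is_derive G p (iF p)).
  { intros p Hp. apply (is_derive_RInt iF G pstar p); [|apply ciF; auto].
    apply locally_open with P; auto. intros b Hb.
    apply (@RInt_correct R_CompleteNormedModule), ex_RInt_continuous.
    intros z Hz. apply ciF. unfold P in *.
    pose proof (Rmin_l pstar b). pose proof (Rmin_r pstar b).
    pose proof (Rmax_l pstar b). pose proof (Rmax_r pstar b).
    destruct (Rle_dec pstar b);
      [rewrite Rmin_left, Rmax_right in Hz | rewrite Rmin_right, Rmax_left in Hz]; lra. }
  assert (HGd' : forall p, P p -> Derive G p = iF p) by (intros; apply is_derive_unique; auto).
  assert (HG0 : G pstar = 0) by (unfold G; rewrite RInt_point; reflexivity).
  destruct (Cinf_local_inverse G pstar rho) as [A2 [B2 [g2 [HA2B2 [Hg20 [Sg2 Hg2]]]]]]; auto.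
  { apply Cinf_of_is_derive with iF; auto. }
  { intros x Hx. rewrite HGd' by auto. apply Rinv_0_lt_compat, HF, Hx. }
  rewrite HG0 in HA2B2, Hg20.
  pose proof (Rmin_l (- A2) B2). pose proof (Rmin_r (- A2) B2).
  set (h := Rmin (- A2) B2) in *.
  exists h, (fun t => g2 (t - tstar)).
  split; [apply Rmin_glb_lt; lra|].
  split; [rewrite Rminus_eq_0; exact Hg20|].
  split.
  { apply (Cinf_comp _ (fun y => A2 < y < B2) g2 (fun t => t - tstar));
      [apply open_oo | auto | intros; unfold h in *; lra | apply Cinf_shift, open_oo]. }
  intros t Ht. destruct (Hg2 (t - tstar) ltac:(lra)) as [Hr Hd].
  split; [apply Rabs_def1; lra|].
  replace (F (g2 (t - tstar))) with (1 * / Derive G (g2 (t - tstar))).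
  - apply (is_derive_comp g2 (fun t => t - tstar)); auto.
    auto_derive; auto.
  - rewrite HGd' by auto. unfold iF. field. apply Rgt_not_eq, HF, Hr.
Qed.

Lemma local_hamiltonian_solution (e W : R -> R) pstar qstar rho tstar : 0 < rho ->
  Cinf (fun p => pstar - rho < p < pstar + rho) e -> Cinf (fun _ => True) W ->
  Derive W qstar < 0 ->
  exists h qh ph, 0 < h /\ qh tstar = qstar /\ ph tstar = pstar /\
    Cinf (fun t => tstar - h < t < tstar + h) qh /\
    Cinf (fun t => tstar - h < t < tstar + h) ph /\
    forall t, tstar - h < t < tstar + h ->
      is_derive qh t (Derive e (ph t)) /\ is_derive ph t (- Derive W (qh t)) /\
      Rabs (ph t - pstar) < rho /\ 0 < - Derive W (qh t).
Proof.
  intros Hrho He HW HWs.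
  destruct (energy_level_curve e W pstar qstar rho) as [rho1 [Q [Hrho1 [HQ0 [SQ HQ]]]]]; auto.
  set (P1 := fun p => pstar - rho1 < p < pstar + rho1).
  assert (HP1 : open P1) by apply open_oo.
  destruct (autonomous_ode_solution (fun p => - Derive W (Q p)) pstar rho1 tstar)
    as [h [ph [Hh [Hph0 [Sph Hph]]]]]; try lra.
  { apply Cinf_opp; auto. apply (Cinf_comp P1 (fun _ => True)); auto.
    apply Cinf_Derive; auto. }
  { apply HQ. }
  assert (HphP1 : forall t, tstar - h < t < tstar + h -> P1 (ph t)).
  { intros t Ht. destruct (Hph t Ht) as [Hr _]. apply Rabs_def2 in Hr. unfold P1. lra. }
  exists h, (fun t => Q (ph t)), ph.
  split; [auto|]. split; [rewrite Hph0; auto|]. split; [auto|].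
  split; [apply (Cinf_comp _ P1); auto; apply open_oo|]. split; [auto|].
  intros t Ht. destruct (Hph t Ht) as [Hr Hd]. destruct (HQ (ph t) (HphP1 t Ht)) as [HF HQd].
  split; [|split; [auto | split; [lra | auto]]].
  replace (Derive e (ph t))
    with (- Derive W (Q (ph t)) * (Derive e (ph t) / - Derive W (Q (ph t)))) by (field; lra).
  apply (is_derive_comp Q ph); auto.
Qed.

Definition solves_oo (a b : R) (e W q p : R -> R) : Prop :=
  forall t, a < t < b -> is_derive q t (Derive e (p t)) /\ is_derive p t (- Derive W (q t)).

Lemma solves_on_solves_oo (I : R -> Prop) a b e W q p :
  (forall t, a < t < b -> I t) -> solves_on I e W q p -> solves_oo a b e W q p.
Proof.
  intros HI Hs t Ht. destruct (Hs t (HI t Ht)) as [Hq Hp].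
  assert (HIt : locally t I) by (apply locally_open with (fun t => a < t < b); auto; apply open_oo).
  split; eapply has_deriv_within_is_derive; eauto.
Qed.

Lemma hamiltonian_solutions_agree (e W : R -> R) pstar r Lam C2 a b t0 q1 p1 q2 p2 :
  (forall x y, Rabs (x - pstar) < r -> Rabs (y - pstar) < r ->
     Rabs (Derive e x - Derive e y) <= Lam * Rabs (x - y)) ->
  (forall x y, Rabs (Derive W x - Derive W y) <= C2 * Rabs (x - y)) ->
  0 <= Lam -> 0 <= C2 -> (Lam + C2) * (b - a) <= 1 / 2 -> a <= t0 <= b ->
  continuous_cc a b q1 -> continuous_cc a b p1 -> continuous_cc a b q2 -> continuous_cc a b p2 ->
  solves_oo a b e W q1 p1 -> solves_oo a b e W q2 p2 ->
  (forall t, a < t < b -> Rabs (p1 t - pstar) < r /\ Rabs (p2 t - pstar) < r) ->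
  q1 t0 = q2 t0 -> p1 t0 = p2 t0 -> forall t, a <= t <= b -> q1 t = q2 t /\ p1 t = p2 t.
Proof.
  intros HeLip HWLip HLam HC2 Hab Ht0 Hcq1 Hcp1 Hcq2 Hcp2 Hs1 Hs2 Hball Hq0 Hp0 t Ht.
  destruct (gronwall_pair_zero (fun t => q1 t - q2 t) (fun t => p1 t - p2 t)
    (fun t => Derive e (p1 t) - Derive e (p2 t))
    (fun t => - Derive W (q1 t) - - Derive W (q2 t)) a b t0 (Lam + C2) Ht0)
    with (x := t) as [Hq Hp]; auto; try lra; try (apply continuous_cc_minus; auto).
  - intros x Hx. destruct (Hs1 x Hx), (Hs2 x Hx).
    split; apply (is_derive_minus (V := R_NormedModule)); auto.
  - intros x Hx. destruct (Hball x Hx) as [Hb1 Hb2]. split.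
    + eapply Rle_trans; [apply HeLip; auto|].
      apply Rmult_le_compat_r; [apply Rabs_pos | lra].
    + replace (- Derive W (q1 x) - - Derive W (q2 x))
        with (Derive W (q2 x) - Derive W (q1 x)) by ring.
      eapply Rle_trans; [apply HWLip|]. rewrite Rabs_minus_sym.
      apply Rmult_le_compat_r; [apply Rabs_pos | lra].
Qed.

(** * Passing through the crossing *)

Lemma Derive_band_lt_crossing V n pstar x :
  x < pstar -> Derive (band V n) x = Derive (Eplus_band V n pstar) x.
Proof.
  intros Hx. apply Derive_ext_loc.
  apply locally_open with (fun y => y < pstar); [apply open_lt | | auto].
  intros y Hy. unfold Eplus_band. destruct Rlt_dec; [reflexivity | lra].
Qed.

Lemma Derive_band_gt_crossing V n pstar x :
  pstar < x -> Derive (band V (S n)) x = Derive (Eplus_band V n pstar) x.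
Proof.
  intros Hx. apply Derive_ext_loc.
  apply locally_open with (fun y => pstar < y); [apply open_gt | | auto].
  intros y Hy. unfold Eplus_band. destruct Rlt_dec; [lra | reflexivity].
Qed.

Lemma gap_succ_pos V n x M : (1 <= n)%nat -> 0 < M -> band V n x <> band V (S n) x ->
  (forall m, (1 <= m)%nat -> m <> n -> m <> S n -> M <= Rabs (band V m x - band V (S n) x)) ->
  0 < gap V (S n) x.
Proof.
  intros Hn HM Hne HA. unfold gap.
  set (E := fun y => exists m', (1 <= m')%nat /\ m' <> S n /\
                                y = Rabs (band V (S n) x - band V m' x)).
  set (m0 := Rmin M (Rabs (band V (S n) x - band V n x))).
  assert (Hm0 : 0 < m0).
  { apply Rmin_glb_lt; auto. apply Rabs_pos_lt. intro. apply Hne. lra. }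
  assert (Hlb : forall y, E y -> m0 <= y).
  { intros y [m' [H1 [H2 ->]]]. destruct (Nat.eq_dec m' n) as [->|Hmn]; [apply Rmin_r|].
    eapply Rle_trans; [apply Rmin_l|]. rewrite Rabs_minus_sym. apply HA; auto. }
  destruct (Glb_Rbar_correct E) as [H1 H2].
  assert (Ha : Rbar_le m0 (Glb_Rbar E)) by (apply H2; intros y Hy; apply Hlb; auto).
  assert (Hb : Rbar_le (Glb_Rbar E) (Rabs (band V (S n) x - band V n x))).
  { apply H1. exists n. repeat split; auto. }
  fold E. destruct (Glb_Rbar E) as [g| |]; simpl in *; try contradiction. lra.
Qed.

Lemma incoming_window (W q p : R -> R) tstar qstar pstar r : 0 < tstar -> 0 < r ->
  ex_derive (Derive W) qstar -> Derive W qstar < 0 ->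
  filterlim q (at_left tstar) (locally qstar) -> filterlim p (at_left tstar) (locally pstar) ->
  exists dl, 0 < dl /\ forall s, tstar - dl < s < tstar ->
    0 < s /\ 0 < - Derive W (q s) /\ Rabs (p s - pstar) < r.
Proof.
  intros Ht Hr HW' HWs Hlq Hlp. apply at_left_window. repeat apply filter_and.
  - apply locally_open with (fun s => 0 < s); [apply open_gt | | auto]. intros; auto.
  - apply (Hlq (fun x => 0 < - Derive W x)).
    apply filter_imp with (fun x => Derive W x < 0); [intros; lra|].
    apply (ex_derive_continuous (Derive W) qstar HW' (fun y => y < 0)).
    apply locally_open with (fun y => y < 0); [apply open_lt | auto | lra].
  - apply (Hlp (fun x => Rabs (x - pstar) < r)). exists (mkposreal r Hr). intros y Hy. exact Hy.
Qed.

Section LocalFlow.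

Variables (e W qh ph : R -> R) (pstar qstar tstar r Lam C1 C2 h delta : R).

Hypothesis HeLip : forall x y, Rabs (x - pstar) < r -> Rabs (y - pstar) < r ->
  Rabs (Derive e x - Derive e y) <= Lam * Rabs (x - y).
Hypothesis HW1 : forall x, Rabs (Derive W x) <= C1.
Hypothesis HWLip : forall x y, Rabs (Derive W x - Derive W y) <= C2 * Rabs (x - y).
Hypothesis HLam : 0 <= Lam.
Hypothesis HC2 : 0 <= C2.

Hypothesis Hqh0 : qh tstar = qstar.
Hypothesis Hph0 : ph tstar = pstar.
Hypothesis Sqh : Cinf (fun t => tstar - h < t < tstar + h) qh.
Hypothesis Sph : Cinf (fun t => tstar - h < t < tstar + h) ph.
Hypothesis Hflow : forall t, tstar - h < t < tstar + h ->
  is_derive qh t (Derive e (ph t)) /\ is_derive ph t (- Derive W (qh t)) /\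
  Rabs (ph t - pstar) < r / 2 /\ 0 < - Derive W (qh t).

Hypothesis Hdelta : 0 < delta < h / 2.
Hypothesis HdC1 : C1 * delta < r / 2.
Hypothesis HdK : (Lam + C2) * delta < 1 / 4.

Let I := fun t => tstar - delta <= t <= tstar + delta.

Lemma local_flow_solves_on :
  smooth_on I qh /\ smooth_on I ph /\ solves_on I e W qh ph /\
  forall t, I t -> Rabs (ph t - pstar) < r.
Proof.
  assert (HI : forall t, I t -> tstar - h < t < tstar + h) by (unfold I; intros; lra).
  split; [apply Cinf_smooth_on with (fun t => tstar - h < t < tstar + h); auto|].
  split; [apply Cinf_smooth_on with (fun t => tstar - h < t < tstar + h); auto|].
  split; intros t Ht; destruct (Hflow t (HI t Ht)) as [Hq [Hp [Hr _]]].
  - split; apply is_derive_has_deriv_within; auto.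
  - pose proof (Rabs_pos (ph t - pstar)). lra.
Qed.

Lemma local_flow_unique_cc a b q p : tstar - delta <= a <= tstar -> tstar <= b <= tstar + delta ->
  continuous_cc a b q -> continuous_cc a b p -> solves_oo a b e W q p ->
  (forall t, a < t < b -> Rabs (p t - pstar) < r) -> q tstar = qstar -> p tstar = pstar ->
  forall t, a <= t <= b -> q t = qh t /\ p t = ph t.
Proof.
  intros Ha Hb Hcq Hcp Hs Hball Hq0 Hp0.
  assert (Hh : forall f, Cinf (fun t => tstar - h < t < tstar + h) f -> continuous_cc a b f).
  { intros f Sf. apply continuous_cc_of_ex_derive. intros x Hx. apply (Sf 0%nat). lra. }
  apply (hamiltonian_solutions_agree e W pstar r Lam C2 a b tstar); auto; try lra.
  - assert (b - a <= 2 * delta) by lra. nra.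
  - intros t Ht. destruct (Hflow t ltac:(lra)) as [Hq [Hp _]]. split; auto.
  - intros t Ht. split; [auto|]. destruct (Hflow t ltac:(lra)) as [_ [_ [Hr _]]].
    pose proof (Rabs_pos (ph t - pstar)). lra.
Qed.

(* Any solution through (qstar, pstar) moves p by at most C1 * delta, so it stays in
   the ball on which Derive e is Lipschitz. *)
Lemma local_flow_unique q p : solves_on I e W q p -> q tstar = qstar -> p tstar = pstar ->
  forall t, I t -> q t = qh t /\ p t = ph t.
Proof.
  intros Hs Hq0 Hp0.
  assert (Hoo : solves_oo (tstar - delta) (tstar + delta) e W q p).
  { apply solves_on_solves_oo with I; auto. unfold I. intros; lra. }
  assert (Hcq : continuous_cc (tstar - delta) (tstar + delta) q).
  { apply continuous_cc_of_has_deriv_within with I (fun t => Derive e (p t)); auto.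
    intros t Ht. apply Hs, Ht. }
  assert (Hcp : continuous_cc (tstar - delta) (tstar + delta) p).
  { apply continuous_cc_of_has_deriv_within with I (fun t => - Derive W (q t)); auto.
    intros t Ht. apply Hs, Ht. }
  apply local_flow_unique_cc; auto; try lra.
  intros t Ht. rewrite <- Hp0.
  eapply Rle_lt_trans; [apply (mean_value_bound p (fun t => - Derive W (q t))
    (tstar - delta) (tstar + delta) tstar C1); auto; try lra|].
  - intros x Hx. apply Hoo, Hx.
  - intros x Hx. rewrite Rabs_Ropp. apply HW1.
  - assert (Rabs (t - tstar) <= delta) by (apply Rabs_le; lra).
    assert (0 <= C1) by (eapply Rle_trans; [apply Rabs_pos | apply (HW1 0)]). nra.
Qed.

Lemma local_flow_left_agree q p dl : delta < dl -> solves_oo (tstar - dl) tstar e W q p ->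
  (forall t, tstar - dl < t < tstar -> Rabs (p t - pstar) < r) ->
  filterlim q (at_left tstar) (locally qstar) -> filterlim p (at_left tstar) (locally pstar) ->
  forall t, tstar - delta <= t < tstar -> q t = qh t /\ p t = ph t.
Proof.
  intros Hdl Hs Hball Hlq Hlp.
  (* Extended by their limits, q and p solve the system on the closed interval
     [tstar - delta, tstar] and meet (qh, ph) at tstar. *)
  set (ext := fun (f : R -> R) l t => if Rlt_dec t tstar then f t else l).
  assert (Hext : forall f l t, t < tstar -> ext f l t = f t).
  { intros f l t Ht. unfold ext. destruct Rlt_dec; [reflexivity | lra]. }
  assert (Hext_loc : forall f l t, tstar - dl < t < tstar -> locally t (fun y => f y = ext f l y)).
  { intros f l t Ht. apply locally_open with (fun y => tstar - dl < y < tstar); auto.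
    - apply open_oo.
    - intros y Hy. symmetry. apply Hext. lra. }
  assert (Hc : forall f df l, (forall t, tstar - dl < t < tstar -> is_derive f t (df t)) ->
     filterlim f (at_left tstar) (locally l) -> continuous_cc (tstar - delta) tstar (ext f l)).
  { intros f df l Hd Hl. apply continuous_cc_left_limit; auto.
    intros x Hx. exists (df x). apply Hd. lra. }
  intros t Ht. rewrite <- (Hext q qstar), <- (Hext p pstar) by lra.
  apply (local_flow_unique_cc (tstar - delta) tstar); try lra.
  - apply Hc with (fun t => Derive e (p t)); auto. intros; apply Hs; auto.
  - apply Hc with (fun t => - Derive W (q t)); auto. intros; apply Hs; auto.
  - intros x Hx. destruct (Hs x ltac:(lra)) as [Hq Hp].
    rewrite (Hext p pstar x), (Hext q qstar x) by lra.
    split; eapply is_derive_ext_loc; eauto; apply Hext_loc; lra.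
  - intros x Hx. rewrite Hext by lra. apply Hball. lra.
  - unfold ext. destruct Rlt_dec; [lra | reflexivity].
  - unfold ext. destruct Rlt_dec; [lra | reflexivity].
Qed.

Lemma local_flow_right_incr t : tstar < t < tstar + h -> pstar < ph t.
Proof.
  intros Ht. rewrite <- Hph0.
  apply (strict_incr_open ph (fun x => - Derive W (qh x)) (tstar - h) (tstar + h)); try lra.
  intros x Hx. destruct (Hflow x Hx) as [_ [Hp [_ Hpos]]]. auto.
Qed.

Section BandCrossing.

Variables (V : R -> R) (n : nat) (U : R -> Prop) (M dl : R) (q p : R -> R).

Hypothesis He_band : e = Eplus_band V n pstar.
Hypothesis HrU : forall x, Rabs (x - pstar) < r -> U x.
Hypothesis Hn : (1 <= n)%nat.
Hypothesis HM : 0 < M.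
Hypothesis A1b : forall x, U x -> band V n x = band V (S n) x -> x = pstar.
Hypothesis A2 : forall x m, closure_set U x -> (1 <= m)%nat -> m <> n -> m <> S n ->
  M <= Rabs (band V m x - band V (S n) x).

Hypothesis Hdt : delta < tstar.
Hypothesis Hdl : delta < dl.
Hypothesis Sq : smooth_on (fun t => 0 <= t < tstar) q.
Hypothesis Sp : smooth_on (fun t => 0 <= t < tstar) p.
Hypothesis Hs : solves_on (fun t => 0 <= t < tstar) (band V n) W q p.
Hypothesis Hlq : filterlim q (at_left tstar) (locally qstar).
Hypothesis Hlp : filterlim p (at_left tstar) (locally pstar).
Hypothesis Hwin : forall s, tstar - dl < s < tstar ->
  0 < s /\ 0 < - Derive W (q s) /\ Rabs (p s - pstar) < r.

Lemma crossing_local_solution :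
  smooth_on I qh /\ smooth_on I ph /\ solves_on I e W qh ph /\
  (forall t, I t -> U (ph t)) /\ qh tstar = qstar /\ ph tstar = pstar.
Proof.
  destruct local_flow_solves_on as [S1 [S2 [S3 S4]]].
  refine (conj S1 (conj S2 (conj S3 (conj _ (conj Hqh0 Hph0))))).
  intros t Ht. apply HrU, S4, Ht.
Qed.

(* Along the incoming trajectory p increases to pstar, so it stays on the branch
   where band n is E_+. *)
Lemma crossing_left_agree : forall t, tstar - delta <= t < tstar -> q t = qh t /\ p t = ph t.
Proof.
  assert (Hoo : solves_oo (tstar - dl) tstar (band V n) W q p).
  { apply solves_on_solves_oo with (fun t => 0 <= t < tstar); auto.
    intros t Ht. destruct (Hwin t Ht). lra. }
  assert (Hlt : forall t, tstar - dl < t < tstar -> p t < pstar).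
  { apply lt_left_limit_of_incr; auto.
    apply (strict_incr_open p (fun t => - Derive W (q t))).
    intros t Ht. split; [apply Hoo | apply Hwin]; auto. }
  apply local_flow_left_agree with dl; auto; [|intros t Ht; apply Hwin; auto].
  intros t Ht. rewrite He_band, <- Derive_band_lt_crossing by (apply Hlt; auto).
  apply Hoo, Ht.
Qed.

Lemma crossing_right_branch : exists T1, tstar + delta < T1 /\
  forall T, tstar + delta <= T <= T1 ->
  exists qn pn : R -> R,
    solves_on (fun t => tstar < t <= T) (band V (S n)) W qn pn /\
    filterlim qn (at_right tstar) (locally qstar) /\
    filterlim pn (at_right tstar) (locally pstar) /\
    (forall t, tstar < t <= T -> 0 < gap V (S n) (pn t)) /\
    (forall t, tstar < t <= tstar + delta -> qh t = qn t /\ ph t = pn t) /\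
    smooth_on (fun t => 0 <= t <= T) (glue tstar delta q qh qn) /\
    smooth_on (fun t => 0 <= t <= T) (glue tstar delta p ph pn).
Proof.
  exists (tstar + h / 2). split; [lra|]. intros T HT. exists qh, ph.
  assert (Hgt : forall t, tstar < t <= T -> pstar < ph t).
  { intros t Ht. apply local_flow_right_incr. lra. }
  assert (HU : forall t, tstar < t <= T -> U (ph t)).
  { intros t Ht. apply HrU. destruct (Hflow t ltac:(lra)) as [_ [_ [Hr _]]].
    pose proof (Rabs_pos (ph t - pstar)). lra. }
  assert (Hright : forall f, Cinf (fun t => tstar - h < t < tstar + h) f ->
     filterlim f (at_right tstar) (locally (f tstar))).
  { intros f Sf. apply (filterlim_filter_le_1 (F := locally tstar)); [apply filter_le_within|].
    apply (ex_derive_continuous f), (Sf 0%nat). lra. }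
  split; [|split; [rewrite <- Hqh0; auto | split; [rewrite <- Hph0; auto | split]]].
  - intros t Ht. destruct (Hflow t ltac:(lra)) as [Hq [Hp _]].
    rewrite (Derive_band_gt_crossing V n pstar), <- He_band by (apply Hgt; auto).
    split; apply is_derive_has_deriv_within; auto.
  - intros t Ht. apply gap_succ_pos with M; auto.
    + intros Heq. apply A1b in Heq; [|apply HU; auto]. specialize (Hgt t Ht). lra.
    + intros m Hm1 Hmn HmSn. apply A2; auto.
      intros eps Heps. exists (ph t). split; [apply HU; auto|].
      rewrite Rminus_eq_0, Rabs_R0. auto.
  - split; [intros; split; reflexivity|].
    split; apply glue_smooth with h; auto; try lra; intros t Ht; apply crossing_left_agree, Ht.
Qed.

End BandCrossing.

End LocalFlow.

Theorem proposition3p7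
  (V W : R -> R) (n : nat) (U : R -> Prop) (pstar : R)
  (q0 p0 tstar qstar : R) (q p : R -> R)
  (* potentials *)
  (HV : smooth V) (HVper : forall z, V (z + 1) = V z)
  (HW : smooth W)
  (HWb : forall k : nat, (1 <= k)%nat -> exists C, forall x, Rabs (Derive_n W k x) <= C)
  (* linear band crossing *)
  (Hn : (1 <= n)%nat)
  (HUB : forall x, U x -> 0 <= x <= 2 * PI)
  (HUo : open_set U) (HpU : U pstar)
  (A1a : band V n pstar = band V (S n) pstar)
  (A1b : forall x, U x -> band V n x = band V (S n) x -> x = pstar)
  (A2 : exists M, 0 < M /\ forall x m, closure_set U x -> (1 <= m)%nat -> m <> n -> m <> S n ->
          M <= Rabs (band V m x - band V (S n) x) /\ M <= Rabs (band V n x - band V m x))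
  (A3p : smooth_on U (Eplus_band V n pstar) /\
         exists chi : R -> R -> C,
           (forall x, U x -> eigfun V x (Eplus_band V n pstar x) (chi x)) /\
           (forall z, smooth_on U (fun x => Re (chi x z)) /\ smooth_on U (fun x => Im (chi x z))))
  (A3m : smooth_on U (Eminus_band V n pstar) /\
         exists chi : R -> R -> C,
           (forall x, U x -> eigfun V x (Eminus_band V n pstar x) (chi x)) /\
           (forall z, smooth_on U (fun x => Re (chi x z)) /\ smooth_on U (fun x => Im (chi x z))))
  (A4 : 0 < Derive (Eplus_band V n pstar) pstar /\ Derive (Eminus_band V n pstar) pstar < 0)
  (* band crossing scenario *)
  (Hgap0 : 0 < gap V n p0) (Htstar : 0 < tstar)
  (Hsol : smooth_on (fun t => 0 <= t < tstar) q /\ smooth_on (fun t => 0 <= t < tstar) p /\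
          solves_on (fun t => 0 <= t < tstar) (band V n) W q p /\ q 0 = q0 /\ p 0 = p0)
  (Huniq : forall q' p' : R -> R,
          smooth_on (fun t => 0 <= t < tstar) q' -> smooth_on (fun t => 0 <= t < tstar) p' ->
          solves_on (fun t => 0 <= t < tstar) (band V n) W q' p' -> q' 0 = q0 -> p' 0 = p0 ->
          forall t, 0 <= t < tstar -> q' t = q t /\ p' t = p t)
  (Hgap : forall t, 0 <= t < tstar -> 0 < gap V n (p t))
  (Hlimp : filterlim p (at_left tstar) (locally pstar))
  (Hlimq : filterlim q (at_left tstar) (locally qstar))
  (HWstar : 0 < - Derive W qstar) :
  exists delta0, 0 < delta0 /\
  forall delta, 0 < delta -> delta < delta0 -> delta < tstar ->
  exists qp pp : R -> R,
    (* (i) *)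
    let I := fun t => tstar - delta <= t <= tstar + delta in
    (smooth_on I qp /\ smooth_on I pp /\ solves_on I (Eplus_band V n pstar) W qp pp /\
     (forall t, I t -> U (pp t)) /\ qp tstar = qstar /\ pp tstar = pstar) /\
    (forall q' p' : R -> R,
       smooth_on I q' -> smooth_on I p' -> solves_on I (Eplus_band V n pstar) W q' p' ->
       (forall t, I t -> U (p' t)) -> q' tstar = qstar -> p' tstar = pstar ->
       forall t, I t -> q' t = qp t /\ p' t = pp t) /\
    (forall t, tstar - delta <= t < tstar -> q t = qp t /\ p t = pp t) /\
    (* (ii) and (iii) *)
    exists T1, tstar + delta < T1 /\
    forall T, tstar + delta <= T <= T1 ->
    exists qn pn : R -> R,
      solves_on (fun t => tstar < t <= T) (band V (S n)) W qn pn /\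
      filterlim qn (at_right tstar) (locally qstar) /\
      filterlim pn (at_right tstar) (locally pstar) /\
      (forall t, tstar < t <= T -> 0 < gap V (S n) (pn t)) /\
      (forall t, tstar < t <= tstar + delta -> qp t = qn t /\ pp t = pn t) /\
      smooth_on (fun t => 0 <= t <= T) (glue tstar delta q qp qn) /\
      smooth_on (fun t => 0 <= t <= T) (glue tstar delta p pp pn).
Proof.
  destruct A2 as [M [HM HA2]]. destruct Hsol as [Sq [Sp [Hs _]]].
  set (e := Eplus_band V n pstar) in *.
  assert (HUopen : open U) by (apply open_set_open; auto).
  assert (He : Cinf U e) by (apply smooth_on_Cinf; [|apply A3p]; auto).
  destruct (Cinf_Derive_lipschitz_near U e pstar) as [r [Lam [Hr [HLam [HrU HeLip]]]]]; auto.
  destruct (smooth_bounded_Derive_lipschitz W) as [C1 [C2 [HC1 [HC2 [HW1 HWLip]]]]]; auto.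
  destruct (local_hamiltonian_solution e W pstar qstar (r / 2) tstar)
    as [h [qh [ph [Hh [Hqh0 [Hph0 [Sqh [Sph Hflow]]]]]]]]; try lra.
  { apply Cinf_subset with U; auto. intros x Hx. apply HrU, Rabs_def1; lra. }
  { intros k x _. apply (HW (S k)). }
  destruct (incoming_window W q p tstar qstar pstar r) as [dl [Hdl Hwin]];
    auto; try lra; try apply (HW 2%nat).
  exists (Rmin (Rmin (h / 2) dl) (Rmin (r / 2 / (C1 + 1)) (1 / 4 / (Lam + C2 + 1)))).
  split; [repeat apply Rmin_glb_lt; try apply Rdiv_lt_0_compat; lra|].
  intros delta Hd Hdd Hdt.
  destruct (Rmin_Rgt_l _ _ _ Hdd) as [[Hdh Hddl]%Rmin_Rgt_l [HdC1 HdK]%Rmin_Rgt_l].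
  apply mul_lt_of_lt_div_succ in HdC1; apply mul_lt_of_lt_div_succ in HdK; try lra.
  exists qh, ph. intros I. split; [|split; [|split]].
  - apply (crossing_local_solution e W qh ph pstar qstar tstar r h delta); auto; lra.
  - intros q' p' _ _ Hs' _ Hq0 Hp0.
    apply (local_flow_unique e W qh ph pstar qstar tstar r Lam C1 C2 h delta); auto; lra.
  - apply (crossing_left_agree e W qh ph pstar qstar tstar r Lam C2 h delta)
      with (V := V) (n := n) (dl := dl); auto; lra.
  - apply (crossing_right_branch e W qh ph pstar qstar tstar r Lam C2 h delta)
      with (U := U) (M := M) (dl := dl); auto; try lra.
    intros x m Hx H1 H2 H3. apply HA2; auto.
Qed.
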